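(* The map $A\mapsto c(A)\bmod 2$ from $\mathrm{SL}(2,\mathbb Z)$ to $\mathbb Z/2$ satisfies $c(-A)=c(A)$, and the induced map on the modular group $\mathrm{SL}(2,\mathbb Z)/\{\pm I\}$ coincides with the unique surjective group homomorphism from the modular group onto $\mathbb Z/2$.
   Context: Admissible hexagons are the sets $\{\pm a,\pm b,\pm(a+b)\}\subset\mathbb Z^2$ with $(a,b)$ a basis of $\mathbb Z^2$ (corresponding to isotopy classes of $\theta$-curves in $T^2$). $\Gamma$ is the graph on admissible hexagons, two adjacent iff they share two opposite pairs of vertices $\pm\sigma,\pm\mu$ (a flip); it is a trivalent tree with graph distance $d$, acted on by $\mathrm{SL}(2,\mathbb Z)$. With $W_0=\{\pm(1,0),\pm(0,1),\pm(1,-1)\}$, $c(A)=d(W_0,AW_0)$. *)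

From HB Require Import structures.
From mathcomp Require Import all_boot all_order all_algebra.
From Stdlib Require Import ClassicalEpsilon.
Set Implicit Arguments. Unset Strict Implicit. Unset Printing Implicit Defensive.
Import Order.TTheory GRing.Theory Num.Theory.
Local Open Scope ring_scope.

Definition vec := (int * int)%type.
Definition vopp (v : vec) : vec := (- v.1, - v.2).
Definition vadd (v w : vec) : vec := (v.1 + w.1, v.2 + w.2).

Definition hexagon := vec -> Prop.
Definition hex_eq (H1 H2 : hexagon) : Prop := forall v, H1 v <-> H2 v.

Definition hex_of (a b : vec) : hexagon := fun v =>
  v = a \/ v = vopp a \/ v = b \/ v = vopp b \/ v = vadd a b \/ v = vopp (vadd a b).

Definition is_basis (a b : vec) : Prop := `|a.1 * b.2 - a.2 * b.1| = 1.

Definition admissible (H : hexagon) : Prop :=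
  exists a b, is_basis a b /\ hex_eq H (hex_of a b).

Definition flip_adj (H1 H2 : hexagon) : Prop :=
  admissible H1 /\ admissible H2 /\ ~ hex_eq H1 H2 /\
  exists s m : vec, s <> m /\ s <> vopp m /\
    H1 s /\ H1 (vopp s) /\ H1 m /\ H1 (vopp m) /\
    H2 s /\ H2 (vopp s) /\ H2 m /\ H2 (vopp m).

Inductive walk : hexagon -> hexagon -> nat -> Prop :=
| walk0 H H' : admissible H -> hex_eq H H' -> walk H H' 0
| walkS H1 H2 H3 n : walk H1 H2 n -> flip_adj H2 H3 -> walk H1 H3 n.+1.

Definition gdist (H1 H2 : hexagon) (n : nat) : Prop :=
  walk H1 H2 n /\ forall m, walk H1 H2 m -> (n <= m)%N.

Definition W0 : hexagon := fun v =>
  v = (1, 0) \/ v = (-1, 0) \/ v = (0, 1) \/ v = (0, -1) \/ v = (1, -1) \/ v = (-1, 1).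

Definition mxact (A : 'M[int]_2) (v : vec) : vec :=
  (A ord0 ord0 * v.1 + A ord0 ord_max * v.2,
   A ord_max ord0 * v.1 + A ord_max ord_max * v.2).

Definition hex_image (A : 'M[int]_2) (H : hexagon) : hexagon :=
  fun v => exists w, H w /\ v = mxact A w.

(* c(A) = d(W0, A W0)  (Gamma is connected, so the distance exists) *)
Definition c (A : 'M[int]_2) : nat :=
  epsilon (inhabits 0%N) (fun n => gdist W0 (hex_image A W0) n).

Definition cmod2 (A : 'M[int]_2) : 'Z_2 := (c A)%:R.

From HB Require Import structures.
From mathcomp Require Import all_boot all_order all_algebra.
From mathcomp Require Import zify ring.
From Stdlib Require Import ClassicalEpsilon Wf_nat.
Import Order.TTheory GRing.Theory Num.Theory.
Local Open Scope ring_scope.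
Set Implicit Arguments. Unset Strict Implicit. Unset Printing Implicit Defensive.

(* Reduction mod 2 followed by the sign of SL(2, F_2) = S_3 gives a
   homomorphism sign_mod2 : SL(2, Z) -> Z/2 with sign_mod2 (-A) = sign_mod2 A.
   It is trivial on the stabiliser of W0, so it induces a 2-colouring of the
   admissible hexagons; each flip exchanges hex_of s m and hex_of s (-m),
   whose colours differ, so the length of every walk from W0 to A W0 has the
   parity of sign_mod2 A, and c A = sign_mod2 A mod 2.  Euclid's algorithm
   writes every A as +-1 times a product of the shears T^(+-1), L^(+-1), each
   of which moves W0 to a neighbour: Gamma is connected, so c is well defined,
   and a homomorphism psi to Z/2 that is even under A |-> -A takes the same
   value on all shears (T L^-1 has order 3 modulo +-1), hence psi = sign_mod2
   as soon as psi is onto. *)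

Implicit Types A B C M N : 'M[int]_2.

Definition mx2 (a b c d : int) : 'M[int]_2 :=
  \matrix_(i, j) if i == ord0 then (if j == ord0 then a else b)
                 else (if j == ord0 then c else d).

Variant mx2_spec : 'M[int]_2 -> Prop := Mx2 a b c d : mx2_spec (mx2 a b c d).

Lemma mx2P A : mx2_spec A.
Proof.
have -> : A = mx2 (A ord0 ord0) (A ord0 ord_max) (A ord_max ord0) (A ord_max ord_max).
  by apply/matrixP => -[[|[|//]] ?] -[[|[|//]] ?]; rewrite mxE /=;
    congr (A _ _); apply: val_inj.
exact: Mx2.
Qed.

Lemma det_mx2 a b c d : \det (mx2 a b c d) = a * d - b * c.
Proof.
rewrite (expand_det_row _ ord0) !big_ord_recl big_ord0 /cofactor !det_mx11 !mxE /=.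
by rewrite addr0 expr0 expr1 !mul1r mulN1r mulrN.
Qed.

Lemma mulmx_mx2 a b c d a' b' c' d' :
  mx2 a b c d *m mx2 a' b' c' d' =
  mx2 (a * a' + b * c') (a * b' + b * d') (c * a' + d * c') (c * b' + d * d').
Proof.
by apply/matrixP => -[[|[|//]] ?] -[[|[|//]] ?];
  rewrite !mxE !big_ord_recl big_ord0 !mxE /= addr0.
Qed.

Lemma oppmx_mx2 a b c d : - mx2 a b c d = mx2 (- a) (- b) (- c) (- d).
Proof. by apply/matrixP => -[[|[|//]] ?] -[[|[|//]] ?]; rewrite !mxE. Qed.

Lemma det_oppmx A : \det (- A) = \det A.
Proof. by case: (mx2P A) => a b c d; rewrite oppmx_mx2 !det_mx2; ring. Qed.

Lemma mx2_1 : 1 = mx2 1 0 0 1.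
Proof. by apply/matrixP => -[[|[|//]] ?] -[[|[|//]] ?]; rewrite !mxE. Qed.

Lemma mxact_mx2 a b c d x y :
  mxact (mx2 a b c d) (x, y) = (a * x + b * y, c * x + d * y).
Proof. by rewrite /mxact !mxE. Qed.

Lemma mul_adj_mx_det1 A : \det A = 1 -> \adj A *m A = 1.
Proof. by move=> dA; rewrite mul_adj_mx dA. Qed.

Lemma det_adj_det1 A : \det A = 1 -> \det (\adj A) = 1.
Proof.
by move=> dA; have := det_mulmx (\adj A) A; rewrite mul_adj_mx_det1 // dA mulr1 det1.
Qed.

(** * Hexagons and the flip graph *)

Ltac vec_eq := rewrite /vopp /vadd /=; congr pair; ring.
Ltac hex_member := first [ vec_eq | left; vec_eq | right; hex_member ].
Ltac hex_eq_solve := let v := fresh "v" in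
  move=> v; split; move=> [->|[->|[->|[->|[->| ->]]]]]; hex_member.

Definition detv (a b : vec) : int := a.1 * b.2 - a.2 * b.1.

Lemma is_basisE a b : is_basis a b <-> detv a b = 1 \/ detv a b = -1.
Proof. rewrite /is_basis /detv; split; lia. Qed.

Lemma is_basis_vopp s m : is_basis s m -> is_basis s (vopp m).
Proof. rewrite /is_basis /vopp /=; lia. Qed.

Lemma voppK : involutive vopp.
Proof. by case=> x y; rewrite /vopp /= !opprK. Qed.

Lemma hex_eq_refl H : hex_eq H H.
Proof. by []. Qed.

Lemma hex_eq_sym H1 H2 : hex_eq H1 H2 -> hex_eq H2 H1.
Proof. by move=> h v; rewrite h. Qed.

Lemma hex_eq_trans H1 H2 H3 : hex_eq H1 H2 -> hex_eq H2 H3 -> hex_eq H1 H3.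
Proof. by move=> h1 h2 v; rewrite h1 h2. Qed.

Lemma hex_of_vopp a b : hex_eq (hex_of (vopp a) (vopp b)) (hex_of a b).
Proof. by case: a => a1 a2; case: b => b1 b2; hex_eq_solve. Qed.

Lemma admissible_hex_eq H H' : hex_eq H H' -> admissible H -> admissible H'.
Proof.
move=> h [a [b [hb e]]]; exists a, b; split=> //.
exact: hex_eq_trans (hex_eq_sym h) e.
Qed.

Lemma admissible_hex_of a b : is_basis a b -> admissible (hex_of a b).
Proof. by exists a, b. Qed.

Lemma hex_of_vertex a b s : hex_of a b s ->
  exists2 b', detv s b' = detv a b & hex_eq (hex_of s b') (hex_of a b).
Proof.
move=> [->|[->|[->|[->|[->| ->]]]]];
  [exists b | exists (vopp b) | exists (vopp (vadd a b)) | exists (vadd a b)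
  | exists (vopp a) | exists a];
  case: a => a1 a2; case: b => b1 b2; rewrite /detv /=; try ring; hex_eq_solve.
Qed.

Lemma hex_of_second_vertex a b m : hex_of a b m -> m <> a -> m <> vopp a ->
  (detv a m = detv a b \/ detv a m = - detv a b) /\
  (hex_eq (hex_of a m) (hex_of a b) \/ hex_eq (hex_of a (vopp m)) (hex_of a b)).
Proof.
move=> [->|[->|[->|[->|[->| ->]]]]] // _ _;
  case: a => a1 a2; case: b => b1 b2; rewrite /detv /=.
- by split; [left | left; hex_eq_solve].
- by split; [right; ring | right; hex_eq_solve].
- by split; [left; ring | right; hex_eq_solve].
- by split; [right; ring | left; hex_eq_solve].
Qed.

Lemma hex_of_two_vertices a b s m : is_basis a b ->
  hex_of a b s -> hex_of a b m -> s <> m -> s <> vopp m ->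
  is_basis s m /\
  (hex_eq (hex_of s m) (hex_of a b) \/ hex_eq (hex_of s (vopp m)) (hex_of a b)).
Proof.
move=> /is_basisE hab /hex_of_vertex [b' db' e] hm sm sm'.
have /hex_of_second_vertex [] : hex_of s b' m by apply/e.
- by move=> ms; apply: sm.
- by move=> ms; apply: sm'; rewrite ms voppK.
move=> dm [e'|e']; split; rewrite ?is_basisE -?db'; try lia.
- by left; apply: hex_eq_trans e' e.
- by right; apply: hex_eq_trans e' e.
Qed.

Lemma flip_adj_hex_eq H1 H2 H1' H2' :
  hex_eq H1 H1' -> hex_eq H2 H2' -> flip_adj H1 H2 -> flip_adj H1' H2'.
Proof.
move=> e1 e2 [a1 [a2 [ne [s [m [sm [sm' hsm]]]]]]].
split; first exact: admissible_hex_eq a1.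
split; first exact: admissible_hex_eq a2.
split.
  move=> e; apply: ne; apply: hex_eq_trans e1 _; apply: hex_eq_trans e _.
  exact: hex_eq_sym.
by exists s, m; rewrite -!e1 -!e2.
Qed.

Lemma flip_adj_hex_of a b : is_basis a b -> flip_adj (hex_of a b) (hex_of a (vopp b)).
Proof.
case: a => a1 a2; case: b => b1 b2 hb.
split; first exact: admissible_hex_of.
split; first exact/admissible_hex_of/is_basis_vopp.
move: hb; rewrite /is_basis /= => hb.
split.
  have /[swap]/[apply] : hex_of (a1, a2) (b1, b2) (vadd (a1, a2) (b1, b2)) by hex_member.
  rewrite /hex_of /vopp /vadd /=.
  by move=> [|[|[|[|[|]]]]] /pair_equal_spec []; nia.
exists (a1, a2), (b1, b2).
split; first by move/pair_equal_spec => []; nia.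
split; first by rewrite /vopp /= => /pair_equal_spec []; nia.
by repeat split; hex_member.
Qed.

Lemma walk_hex_eqr H1 H2 H2' n : walk H1 H2 n -> hex_eq H2 H2' -> walk H1 H2' n.
Proof.
case=> [H H' a e|H H' H'' k w f] e'.
  by apply: walk0 => //; apply: hex_eq_trans e e'.
exact: walkS w (flip_adj_hex_eq (hex_eq_refl _) e' f).
Qed.

Lemma walk_cat H1 H2 H3 n k : walk H1 H2 n -> walk H2 H3 k -> walk H1 H3 (n + k).
Proof.
move=> w1 w2; elim: w2 H1 w1 => [H H' a e|H H' H'' j w ih f] H1 w1.
  by rewrite addn0; apply: walk_hex_eqr w1 e.
by rewrite addnS; apply: walkS (ih _ w1) f.
Qed.

Lemma walk_flip H1 H2 : flip_adj H1 H2 -> walk H1 H2 1.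
Proof. by move=> f; have [a1 _] := f; apply: walkS f; apply: walk0. Qed.

Lemma gdist_hex_eqr H1 H2 H2' n : hex_eq H2 H2' -> gdist H1 H2 n -> gdist H1 H2' n.
Proof.
move=> e [w hmin]; split; first exact: walk_hex_eqr w e.
by move=> m wm; apply/hmin/(walk_hex_eqr wm)/hex_eq_sym.
Qed.

Lemma gdist_unique H1 H2 m n : gdist H1 H2 m -> gdist H1 H2 n -> m = n.
Proof. by move=> [wm hm] [wn hn]; apply/eqP; rewrite eqn_leq hm ?hn. Qed.

Lemma mxact_vopp A v : mxact A (vopp v) = vopp (mxact A v).
Proof. by rewrite /mxact /vopp /=; congr pair; ring. Qed.

Lemma mxact_vadd A v w : mxact A (vadd v w) = vadd (mxact A v) (mxact A w).
Proof. by rewrite /mxact /vadd /=; congr pair; ring. Qed.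

Lemma mxact_mul A B v : mxact (A *m B) v = mxact A (mxact B v).
Proof.
case: (mx2P A) => a b c d; case: (mx2P B) => a' b' c' d'; case: v => x y.
by rewrite mulmx_mx2 !mxact_mx2; congr pair; ring.
Qed.

Lemma mxact1 v : mxact 1 v = v.
Proof. by case: v => x y; rewrite mx2_1 mxact_mx2; congr pair; ring. Qed.

Lemma mxact_oppmx A v : mxact (- A) v = vopp (mxact A v).
Proof.
case: (mx2P A) => a b c d; case: v => x y.
by rewrite oppmx_mx2 !mxact_mx2 /vopp /=; congr pair; ring.
Qed.

Lemma detv_mxact A a b : detv (mxact A a) (mxact A b) = \det A * detv a b.
Proof.
case: (mx2P A) => p q r s; case: a => a1 a2; case: b => b1 b2.
by rewrite !mxact_mx2 det_mx2 /detv /=; ring.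
Qed.

Lemma mxact_inj A : \det A = 1 -> injective (mxact A).
Proof.
move=> dA v w e.
by rewrite -[v]mxact1 -[w]mxact1 -(mul_adj_mx_det1 dA) !mxact_mul e.
Qed.

Lemma is_basis_mxact A a b :
  \det A = 1 -> is_basis a b -> is_basis (mxact A a) (mxact A b).
Proof. by move=> dA /is_basisE hb; apply/is_basisE; rewrite detv_mxact dA mul1r. Qed.

Lemma hex_image_hex_eq A H H' : hex_eq H H' -> hex_eq (hex_image A H) (hex_image A H').
Proof. by move=> e v; split=> -[w [hw ->]]; exists w; rewrite (e w) in hw *. Qed.

Lemma hex_image_mul A B H :
  hex_eq (hex_image (A *m B) H) (hex_image A (hex_image B H)).
Proof.
move=> v; split=> [[w [hw ->]]|[_ [[w [hw ->]] ->]]].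
  by exists (mxact B w); split; [exists w | rewrite mxact_mul].
by exists w; rewrite mxact_mul.
Qed.

Lemma hex_image1 H : hex_eq (hex_image 1 H) H.
Proof.
move=> v; split=> [[w [hw ->]]|hv]; first by rewrite mxact1.
by exists v; rewrite mxact1.
Qed.

Lemma hex_image_hex_of A a b :
  hex_eq (hex_image A (hex_of a b)) (hex_of (mxact A a) (mxact A b)).
Proof.
move=> v; rewrite {2}/hex_of -!mxact_vopp -mxact_vadd -mxact_vopp; split.
  by move=> [w [[->|[->|[->|[->|[->| ->]]]]] ->]]; tauto.
by move=> [->|[->|[->|[->|[->| ->]]]]]; eexists; (split; [|reflexivity]);
  rewrite /hex_of; tauto.
Qed.

Lemma admissible_hex_image A H : \det A = 1 -> admissible H -> admissible (hex_image A H).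
Proof.
move=> dA [a [b [hb e]]]; exists (mxact A a), (mxact A b).
split; first exact: is_basis_mxact.
exact: hex_eq_trans (hex_image_hex_eq A e) (hex_image_hex_of A a b).
Qed.

Lemma hex_image_inj A H1 H2 : \det A = 1 ->
  hex_eq (hex_image A H1) (hex_image A H2) -> hex_eq H1 H2.
Proof.
move=> dA e v; split=> hv.
  by have [w [hw /(mxact_inj dA) ->]] : hex_image A H2 (mxact A v) by apply/e; exists v.
by have [w [hw /(mxact_inj dA) ->]] : hex_image A H1 (mxact A v) by apply/e; exists v.
Qed.

Lemma flip_adj_hex_image A H1 H2 : \det A = 1 ->
  flip_adj H1 H2 -> flip_adj (hex_image A H1) (hex_image A H2).
Proof.
move=> dA [a1 [a2 [ne [s [m [sm [sm' hsm]]]]]]].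
split; first exact: admissible_hex_image.
split; first exact: admissible_hex_image.
split; first by move=> e; apply/ne/(hex_image_inj dA e).
exists (mxact A s), (mxact A m).
split; first by move/(mxact_inj dA).
split; first by rewrite -mxact_vopp => /(mxact_inj dA).
rewrite -!mxact_vopp.
by repeat split; eexists; (split; [|reflexivity]); apply hsm.
Qed.

Lemma walk_hex_image A H1 H2 n : \det A = 1 ->
  walk H1 H2 n -> walk (hex_image A H1) (hex_image A H2) n.
Proof.
move=> dA; elim=> [H H' a e|H H' H'' k w ih f].
  by apply: walk0; [exact: admissible_hex_image | exact: hex_image_hex_eq].
exact: walkS ih (flip_adj_hex_image dA f).
Qed.

Lemma W0_hex_of : hex_eq W0 (hex_of (1, 0) (-1, 1)).
Proof. hex_eq_solve. Qed.

Lemma is_basis_W0 : is_basis (1, 0) (-1, 1).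
Proof. by []. Qed.

Lemma hex_image_W0 A :
  hex_eq (hex_image A W0) (hex_of (mxact A (1, 0)) (mxact A (-1, 1))).
Proof. exact: hex_eq_trans (hex_image_hex_eq A W0_hex_of) (hex_image_hex_of _ _ _). Qed.

Lemma hex_image_oppmx_W0 A : hex_eq (hex_image (- A) W0) (hex_image A W0).
Proof.
apply: hex_eq_trans (hex_image_W0 _) (hex_eq_trans _ (hex_eq_sym (hex_image_W0 _))).
rewrite !mxact_oppmx; exact: hex_of_vopp.
Qed.

(** * The sign character of SL(2, Z) *)

Definition oddz (x : int) : bool := odd `|x|.

Lemma oddzD x y : oddz (x + y) = oddz x (+) oddz y.
Proof. by rewrite /oddz; case ex: (odd `|x|%N); case ey: (odd `|y|%N) => /=; lia. Qed.

Lemma oddzM x y : oddz (x * y) = oddz x && oddz y.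
Proof. by rewrite /oddz abszM oddM. Qed.

Lemma oddz1 : oddz 1 = true.
Proof. by []. Qed.

Lemma oddzN x : oddz (- x) = oddz x.
Proof. by rewrite /oddz abszN. Qed.

(* The sign of the permutation of the three nonzero vectors of F_2^2
   induced by A mod 2. *)
Definition sign_mod2 A : bool :=
  let a := oddz (A ord0 ord0) in let b := oddz (A ord0 ord_max) in
  let c := oddz (A ord_max ord0) in let d := oddz (A ord_max ord_max) in
  [&& a & c] (+) [&& b & d] (+) [&& b & c].

Lemma sign_mod2_mx2 a b c d : sign_mod2 (mx2 a b c d) =
  [&& oddz a & oddz c] (+) [&& oddz b & oddz d] (+) [&& oddz b & oddz c].
Proof. by rewrite /sign_mod2 !mxE. Qed.

Lemma oddz_det a b c d : oddz (a * d - b * c) = [&& oddz a & oddz d] (+) [&& oddz b & oddz c].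
Proof. by rewrite oddzD oddzN !oddzM. Qed.

Lemma sign_mod2_mul A B : \det A = 1 -> \det B = 1 ->
  sign_mod2 (A *m B) = sign_mod2 A (+) sign_mod2 B.
Proof.
case: (mx2P A) => a b c d; case: (mx2P B) => a' b' c' d'.
rewrite !det_mx2 mulmx_mx2 !sign_mod2_mx2 => /(congr1 oddz) + /(congr1 oddz).
rewrite !oddz_det !oddzD !oddzM oddz1.
by case: (oddz a) (oddz b) (oddz c) (oddz d) (oddz a') (oddz b') (oddz c') (oddz d')
  => [] [] [] [] [] [] [] [].
Qed.

Lemma sign_mod2_oppmx A : sign_mod2 (- A) = sign_mod2 A.
Proof. by case: (mx2P A) => a b c d; rewrite oppmx_mx2 !sign_mod2_mx2 !oddzN. Qed.

Lemma sign_mod2_1 : sign_mod2 1 = false.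
Proof. by rewrite mx2_1 sign_mod2_mx2. Qed.

Lemma W0E x y : W0 (x, y) ->
  x = 1 /\ y = 0 \/ x = -1 /\ y = 0 \/ x = 0 /\ y = 1 \/ x = 0 /\ y = -1 \/
  x = 1 /\ y = -1 \/ x = -1 /\ y = 1.
Proof. by move=> [|[|[|[|[|]]]]] [-> ->]; tauto. Qed.

Lemma sign_mod2_stab C : \det C = 1 -> hex_eq (hex_image C W0) W0 -> sign_mod2 C = false.
Proof.
case: (mx2P C) => a b c d; rewrite det_mx2 => + e.
have W0C x y : W0 (x, y) -> W0 (a * x + b * y, c * x + d * y).
  by move=> hv; rewrite -mxact_mx2; apply/e; exists (x, y).
have := W0C 1 (-1) ltac:(hex_member).
have := W0C 0 1 ltac:(hex_member).
have := W0C 1 0 ltac:(hex_member).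
rewrite !mulr1 !mulr0 !addr0 !add0r !mulrN1 sign_mod2_mx2.
move=> /W0E [[-> ->]|[[-> ->]|[[-> ->]|[[-> ->]|[[-> ->]|[-> ->]]]]]];
move=> /W0E [[-> ->]|[[-> ->]|[[-> ->]|[[-> ->]|[[-> ->]|[-> ->]]]]]];
by rewrite ?oddzN /= => /W0E; lia.
Qed.

Lemma sign_mod2_hex_image_W0 A B : \det A = 1 -> \det B = 1 ->
  hex_eq (hex_image A W0) (hex_image B W0) -> sign_mod2 A = sign_mod2 B.
Proof.
move=> dA dB e.
have dAB : \det (\adj A *m B) = 1 by rewrite det_mulmx det_adj_det1 // dB mulr1.
have stab : sign_mod2 (\adj A *m B) = false.
  apply: sign_mod2_stab dAB _.
  apply: hex_eq_trans (hex_image_mul _ _ _) _.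
  apply: hex_eq_trans (hex_image_hex_eq _ (hex_eq_sym e)) _.
  apply: hex_eq_trans (hex_eq_sym (hex_image_mul _ _ _)) _.
  by rewrite mul_adj_mx_det1 //; apply: hex_image1.
have -> : B = A *m (\adj A *m B) by rewrite mulmxA (mulmx1C (mul_adj_mx_det1 dA)) mul1mx.
by rewrite sign_mod2_mul // stab addbF.
Qed.

(* Its columns a and a + b are the images of (1, 0) and (0, 1), so that it maps
   W0 = hex_of (1, 0) (-1, 1) onto hex_of a b; the second branch fixes the
   orientation. *)
Definition hex_frame (a b : vec) : 'M[int]_2 :=
  if detv a b == 1 then mx2 a.1 (a.1 + b.1) a.2 (a.2 + b.2)
  else mx2 b.1 (a.1 + b.1) b.2 (a.2 + b.2).

Lemma det_hex_frame a b : is_basis a b -> \det (hex_frame a b) = 1.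
Proof.
case: a => a1 a2; case: b => b1 b2 /is_basisE.
rewrite /hex_frame /detv /= => -[] hd; rewrite hd /= det_mx2 /=; lia.
Qed.

Lemma hex_image_hex_frame a b : hex_eq (hex_image (hex_frame a b) W0) (hex_of a b).
Proof.
case: a => a1 a2; case: b => b1 b2.
apply: hex_eq_trans (hex_image_W0 _) _.
by rewrite /hex_frame; case: ifP => _; rewrite !mxact_mx2 /=; hex_eq_solve.
Qed.

Lemma sign_mod2_hex_frame_vopp s m : is_basis s m ->
  sign_mod2 (hex_frame s (vopp m)) = ~~ sign_mod2 (hex_frame s m).
Proof.
case: s => s1 s2; case: m => m1 m2 /is_basisE hsm.
have odet : oddz (detv (s1, s2) (m1, m2)) by case: hsm => ->.
rewrite /hex_frame (_ : detv _ _ = - detv (s1, s2) (m1, m2)); last by rewrite /detv /=; ring.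
case: hsm => ->; move: odet; rewrite /= /detv /vopp /= oddz_det !sign_mod2_mx2 !oddzD !oddzN.
all: by case: (oddz s1) (oddz s2) (oddz m1) (oddz m2) => [] [] [] [].
Qed.

Lemma sign_mod2_hex_of A s m : \det A = 1 -> is_basis s m ->
  hex_eq (hex_of s m) (hex_image A W0) -> sign_mod2 A = sign_mod2 (hex_frame s m).
Proof.
move=> dA hsm e; apply: sign_mod2_hex_image_W0 (det_hex_frame hsm) _ => //.
exact: hex_eq_trans (hex_eq_sym e) (hex_eq_sym (hex_image_hex_frame s m)).
Qed.

Lemma sign_mod2_flip_adj A B : \det A = 1 -> \det B = 1 ->
  flip_adj (hex_image A W0) (hex_image B W0) -> sign_mod2 B = ~~ sign_mod2 A.
Proof.
move=> dA dB [_ [_ [ne [s [m [sm [sm' [As [_ [Am [_ [Bs [_ [Bm _]]]]]]]]]]]]]].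
have two_vertices C : \det C = 1 -> hex_image C W0 s -> hex_image C W0 m ->
    is_basis s m /\ (hex_eq (hex_of s m) (hex_image C W0) \/
                     hex_eq (hex_of s (vopp m)) (hex_image C W0)).
  move=> dC /hex_image_W0 Cs /hex_image_W0 Cm.
  have [hsm e] := hex_of_two_vertices (is_basis_mxact dC is_basis_W0)
                    Cs Cm sm sm'.
  split=> //; case: e => e; [left|right]; apply: hex_eq_trans e (hex_eq_sym (hex_image_W0 C)).
have [hsm [eA|eA]] := two_vertices A dA As Am;
have [_ [eB|eB]] := two_vertices B dB Bs Bm.
- by case: ne; apply: hex_eq_trans (hex_eq_sym eA) eB.
- by rewrite (sign_mod2_hex_of dA hsm eA) (sign_mod2_hex_of dB (is_basis_vopp hsm) eB)
     sign_mod2_hex_frame_vopp.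
- by rewrite (sign_mod2_hex_of dA (is_basis_vopp hsm) eA) (sign_mod2_hex_of dB hsm eB)
     sign_mod2_hex_frame_vopp ?negbK.
- by case: ne; apply: hex_eq_trans (hex_eq_sym eA) eB.
Qed.

Lemma admissible_hex_image_W0 H : admissible H ->
  exists2 M, \det M = 1 & hex_eq H (hex_image M W0).
Proof.
move=> [a [b [hb e]]]; exists (hex_frame a b); first exact: det_hex_frame.
exact: hex_eq_trans e (hex_eq_sym (hex_image_hex_frame a b)).
Qed.

Lemma odd_walk H H' n : walk H H' n -> forall A B, \det A = 1 -> \det B = 1 ->
  hex_eq H (hex_image A W0) -> hex_eq H' (hex_image B W0) ->
  odd n = sign_mod2 A (+) sign_mod2 B.
Proof.
elim=> [H1 H2 _ e|H1 H2 H3 k _ ih f] A B dA dB eA eB.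
  rewrite (sign_mod2_hex_image_W0 dA dB) ?addbb //.
  exact: hex_eq_trans (hex_eq_sym eA) (hex_eq_trans e eB).
have [a2 _] := f; have [M dM eM] := admissible_hex_image_W0 a2.
rewrite /= (ih A M) // (sign_mod2_flip_adj dM dB (flip_adj_hex_eq eM eB f)).
by case: (sign_mod2 A); case: (sign_mod2 M).
Qed.

(** * Generators of SL(2, Z) *)

Definition shearU (k : int) := mx2 1 k 0 1.
Definition shearL (k : int) := mx2 1 0 k 1.

Lemma det_shearU k : \det (shearU k) = 1.
Proof. by rewrite det_mx2; ring. Qed.

Lemma det_shearL k : \det (shearL k) = 1.
Proof. by rewrite det_mx2; ring. Qed.

Lemma sign_mod2_shear k : k = 1 \/ k = -1 -> sign_mod2 (shearU k) /\ sign_mod2 (shearL k).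
Proof. by case=> ->; rewrite !sign_mod2_mx2 ?oddzN. Qed.

Inductive generated : 'M[int]_2 -> Prop :=
| generated1 : generated 1
| generatedN1 : generated (- 1)
| generatedU k A : k = 1 \/ k = -1 -> generated A -> generated (shearU k *m A)
| generatedL k A : k = 1 \/ k = -1 -> generated A -> generated (shearL k *m A).

Lemma shearU_mx2 k a b c d : shearU k *m mx2 a b c d = mx2 (a + k * c) (b + k * d) c d.
Proof. by rewrite mulmx_mx2; congr mx2; ring. Qed.

Lemma shearL_mx2 k a b c d : shearL k *m mx2 a b c d = mx2 a b (c + k * a) (d + k * b).
Proof. by rewrite mulmx_mx2; congr mx2; ring. Qed.

Lemma generated_shearU_mul k A : k = 1 \/ k = -1 -> generated (shearU k *m A) -> generated A.
Proof.
move=> hk g; have -> : A = shearU (- k) *m (shearU k *m A).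
  by case: (mx2P A) => a b c d; rewrite !shearU_mx2; congr mx2; ring.
by apply: generatedU g; case: hk => ->; [right|left].
Qed.

Lemma generated_shearL_mul k A : k = 1 \/ k = -1 -> generated (shearL k *m A) -> generated A.
Proof.
move=> hk g; have -> : A = shearL (- k) *m (shearL k *m A).
  by case: (mx2P A) => a b c d; rewrite !shearL_mx2; congr mx2; ring.
by apply: generatedL g; case: hk => ->; [right|left].
Qed.

Lemma euclid_step (a c : int) : c != 0 -> (absz c <= absz a)%N ->
  exists2 k : int, k = 1 \/ k = -1 & (absz (a + k * c)%R < absz a)%N.
Proof.
move=> c0 ca; have [ac|ac] : 0 < a * c \/ a * c < 0 by nia.
- by exists (-1); [right | nia].
- by exists 1; [left | nia].
Qed.

Lemma mulz_eq1 (a d : int) : a * d = 1 -> (a = 1 \/ a = -1) /\ d = a.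
Proof.
move=> h; have /eqP : (absz a * absz d = 1)%N by rewrite -abszM h.
rewrite muln_eq1 => /andP[/eqP ha _].
have [a1|a1] : a = 1 \/ a = -1 by lia.
all: by move: h; rewrite a1 ?mul1r ?mulN1r; lia.
Qed.

Lemma generated_unipotent e b : e = 1 \/ e = -1 -> generated (mx2 e b 0 e).
Proof.
move=> he; have [n] := ubnP (absz b); elim: n b => // n ih b hb.
have [-> | b0] := eqVneq b 0.
  case: he => ->; first by rewrite -mx2_1; apply: generated1.
  by rewrite -oppr0 -oppmx_mx2 -mx2_1; apply: generatedN1.
have e0 : e != 0 by case: he => ->.
have eb : (absz e <= absz b)%N by case: he => ->; lia.
have [k hk hbk] := euclid_step e0 eb.
by apply: (generated_shearU_mul hk); rewrite shearU_mx2 mulr0 addr0; apply: ih; lia.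
Qed.

Lemma generated_mx2 a b c d : a * d - b * c = 1 -> generated (mx2 a b c d).
Proof.
have [n] := ubnP (absz a + absz c); elim: n a b c d => // n ih a b c d hn hdet.
have [c0 | c0] := eqVneq c 0.
  rewrite c0; have [he ->] : (a = 1 \/ a = -1) /\ d = a.
    by apply: mulz_eq1; rewrite -hdet c0; ring.
  exact: generated_unipotent.
have [a0 | a0] := eqVneq a 0.
  apply: (@generated_shearU_mul 1); first by left.
  apply: (@generated_shearL_mul (-1)); first by right.
  have [hc hb] : (c = 1 \/ c = -1) /\ - b = c.
    by apply: mulz_eq1; rewrite -hdet a0; ring.
  rewrite !shearU_mx2 !shearL_mx2 (_ : mx2 _ _ _ _ = mx2 c (b + d) 0 c).
    exact: generated_unipotent.
  by rewrite a0 -hb; congr mx2; ring.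
have [ca | ac] := leqP (absz c) (absz a).
  have [k hk hak] := euclid_step c0 ca.
  apply: (generated_shearU_mul hk); rewrite shearU_mx2; apply: ih; first lia.
  by rewrite -hdet; ring.
have [k hk hck] := euclid_step a0 (ltnW ac).
apply: (generated_shearL_mul hk); rewrite shearL_mx2; apply: ih; first lia.
by rewrite -hdet; ring.
Qed.

Lemma generated_SL2 A : \det A = 1 -> generated A.
Proof. by case: (mx2P A) => a b c d; rewrite det_mx2; apply: generated_mx2. Qed.

Lemma det_generated A : generated A -> \det A = 1.
Proof.
elim=> [||k B _ _ dB|k B _ _ dB]; rewrite ?det_oppmx ?det1 //.
- by rewrite det_mulmx dB det_shearU mulr1.
- by rewrite det_mulmx dB det_shearL mulr1.
Qed.

Lemma flip_adj_W0 N s m : is_basis s m -> hex_eq (hex_of s m) W0 ->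
  hex_eq (hex_of s (vopp m)) (hex_of (mxact N (1, 0)) (mxact N (-1, 1))) ->
  flip_adj W0 (hex_image N W0).
Proof.
move=> hsm e e'; apply: flip_adj_hex_eq e _ (flip_adj_hex_of hsm).
exact: hex_eq_trans e' (hex_eq_sym (hex_image_W0 N)).
Qed.

Lemma flip_adj_W0_shear k : k = 1 \/ k = -1 ->
  flip_adj W0 (hex_image (shearU k) W0) /\ flip_adj W0 (hex_image (shearL k) W0).
Proof.
case=> ->; split.
- by apply: (@flip_adj_W0 _ (1, 0) (0, -1)); rewrite /shearU /shearL ?mxact_mx2 //; hex_eq_solve.
- by apply: (@flip_adj_W0 _ (1, 0) (0, -1)); rewrite /shearU /shearL ?mxact_mx2 //; hex_eq_solve.
- by apply: (@flip_adj_W0 _ (1, 0) (-1, 1)); rewrite /shearU /shearL ?mxact_mx2 //; hex_eq_solve.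
- by apply: (@flip_adj_W0 _ (0, 1) (1, -1)); rewrite /shearU /shearL ?mxact_mx2 //; hex_eq_solve.
Qed.

Lemma admissible_W0 : admissible W0.
Proof. exact: admissible_hex_eq (hex_eq_sym W0_hex_of) (admissible_hex_of is_basis_W0). Qed.

Lemma walk_W0_generated A : generated A -> exists n, walk W0 (hex_image A W0) n.
Proof.
have step N B n : \det N = 1 -> flip_adj W0 (hex_image N W0) ->
    walk W0 (hex_image B W0) n -> walk W0 (hex_image (N *m B) W0) n.+1.
  move=> dN f w; apply: walk_cat (walk_flip f) _.
  exact: walk_hex_eqr (walk_hex_image dN w) (hex_eq_sym (hex_image_mul _ _ _)).
elim=> [||k B hk _ [n w]|k B hk _ [n w]].
- by exists 0%N; apply: walk0 admissible_W0 (hex_eq_sym (hex_image1 _)).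
- exists 0%N; apply: walk0 admissible_W0 _.
  exact: hex_eq_sym (hex_eq_trans (hex_image_oppmx_W0 _) (hex_image1 _)).
- by exists n.+1; apply: step w; [apply: det_shearU | case: (flip_adj_W0_shear hk)].
- by exists n.+1; apply: step w; [apply: det_shearL | case: (flip_adj_W0_shear hk)].
Qed.

Lemma gdist_c A : \det A = 1 -> gdist W0 (hex_image A W0) (c A).
Proof.
move=> dA; rewrite /c; apply: epsilon_spec.
have [n w] := walk_W0_generated (generated_SL2 dA).
have [m [[wm hm] _]] := @dec_inh_nat_subset_has_unique_least_element _
  (fun n => classic _) (ex_intro _ n w).
by exists m; split=> // k /hm /ssrnat.leP.
Qed.

Lemma c_oppmx A : \det A = 1 -> c (- A) = c A.
Proof.
move=> dA; apply: gdist_unique (gdist_c _) _; first by rewrite det_oppmx.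
exact: gdist_hex_eqr (hex_eq_sym (hex_image_oppmx_W0 A)) (gdist_c dA).
Qed.

Lemma odd_c A : \det A = 1 -> odd (c A) = sign_mod2 A.
Proof.
move=> dA; have [w _] := gdist_c dA.
by rewrite (odd_walk w (A := 1) (B := A)) ?det1 ?sign_mod2_1 //; apply: hex_eq_sym (hex_image1 _).
Qed.

Lemma cmod2E A : \det A = 1 -> cmod2 A = (sign_mod2 A)%:R.
Proof. by move=> dA; rewrite /cmod2 -(Zp_nat_mod (isT : (1 < 2)%N)) modn2 odd_c. Qed.

Lemma Z2P (x : 'Z_2) : x = 0 \/ x = 1.
Proof. by case: x => -[|[|//]] ?; [left | right]; apply: val_inj. Qed.

Lemma pchar_Z2 : 2 \in [pchar 'Z_2].
Proof. exact: (@pchar_Fp 2). Qed.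

Lemma natr_addb (a b : bool) : (a (+) b)%:R = a%:R + b%:R :> 'Z_2.
Proof. by case: a; case: b; rewrite /= ?addr0 ?add0r ?(addrr_pchar2 pchar_Z2). Qed.

Section HomomorphismsToZ2.

Variable psi : 'M[int]_2 -> 'Z_2.
Hypothesis psiM : forall A B, \det A = 1 -> \det B = 1 -> psi (A *m B) = psi A + psi B.
Hypothesis psiN : forall A, \det A = 1 -> psi (- A) = psi A.

Lemma hom_Z2_1 : psi 1 = 0.
Proof.
have := psiM (det1 _ 2) (det1 _ 2); rewrite mul1mx -{1}[psi 1]addr0.
by move/addrI/esym.
Qed.

Lemma hom_Z2_inv A B : \det A = 1 -> \det B = 1 -> A *m B = 1 -> psi A = psi B.
Proof.
move=> dA dB AB; apply/eqP.
by rewrite -[psi B](oppr_pchar2 pchar_Z2) -addr_eq0 -psiM // AB hom_Z2_1.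
Qed.

Lemma hom_Z2_shear k : k = 1 \/ k = -1 ->
  psi (shearU k) = psi (shearU 1) /\ psi (shearL k) = psi (shearU 1).
Proof.
set X := shearU 1 *m shearL (-1).
have dX : \det X = 1 by rewrite det_mulmx det_shearU det_shearL mulr1.
have X3 : X *m (X *m X) = - 1.
  by rewrite /X /shearU /shearL !mulmx_mx2 mx2_1 oppmx_mx2; congr mx2; ring.
have psiX : psi X = 0.
  have dXX : \det (X *m X) = 1 by rewrite det_mulmx dX mulr1.
  have := psiM dX dXX; rewrite X3 psiN ?det1 // hom_Z2_1 psiM //.
  by rewrite (addrr_pchar2 pchar_Z2) addr0 => /esym.
have psiUm : psi (shearU (-1)) = psi (shearU 1).
  by apply: hom_Z2_inv; rewrite ?det_shearU // /shearU mulmx_mx2 mx2_1; congr mx2; ring.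
have psiLm : psi (shearL (-1)) = psi (shearU 1).
  apply/esym/eqP; rewrite -[psi (shearL (-1))](oppr_pchar2 pchar_Z2) -addr_eq0.
  by rewrite -psiM ?det_shearU ?det_shearL // psiX.
have psiL : psi (shearL 1) = psi (shearU 1).
  rewrite -psiLm; apply: hom_Z2_inv; rewrite ?det_shearL //.
  by rewrite /shearL mulmx_mx2 mx2_1; congr mx2; ring.
by case=> ->.
Qed.

Lemma hom_Z2_generated A : generated A -> psi A = (sign_mod2 A)%:R * psi (shearU 1).
Proof.
elim=> [||k B hk gB ih|k B hk gB ih].
- by rewrite hom_Z2_1 sign_mod2_1 mul0r.
- by rewrite psiN ?det1 // hom_Z2_1 sign_mod2_oppmx sign_mod2_1 mul0r.
- have [hU _] := sign_mod2_shear hk.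
  rewrite psiM ?det_shearU ?det_generated // sign_mod2_mul ?det_shearU ?det_generated //.
  by rewrite hU natr_addb ih (hom_Z2_shear hk).1 mulrDl mul1r.
- have [_ hL] := sign_mod2_shear hk.
  rewrite psiM ?det_shearL ?det_generated // sign_mod2_mul ?det_shearL ?det_generated //.
  by rewrite hL natr_addb ih (hom_Z2_shear hk).2 mulrDl mul1r.
Qed.

End HomomorphismsToZ2.

Theorem theorem6 :
  (* c(-A) = c(A) *)
  (forall A : 'M[int]_2, \det A = 1 -> c (- A) = c A) /\
  (* A |-> c(A) mod 2 is a group homomorphism SL(2,Z) -> Z/2 ... *)
  (forall A B : 'M[int]_2, \det A = 1 -> \det B = 1 ->
     cmod2 (A *m B) = cmod2 A + cmod2 B) /\
  (* ... which is surjective ... *)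
  (forall z : 'Z_2, exists A : 'M[int]_2, \det A = 1 /\ cmod2 A = z) /\
  (* ... and equals every surjective homomorphism SL(2,Z) -> Z/2 that
     factors through SL(2,Z)/{+-I} (uniqueness). *)
  (forall psi : 'M[int]_2 -> 'Z_2,
     (forall A B : 'M[int]_2, \det A = 1 -> \det B = 1 ->
        psi (A *m B) = psi A + psi B) ->
     (forall A : 'M[int]_2, \det A = 1 -> psi (- A) = psi A) ->
     (forall z : 'Z_2, exists A : 'M[int]_2, \det A = 1 /\ psi A = z) ->
     forall A : 'M[int]_2, \det A = 1 -> psi A = cmod2 A).
Proof.
split; first exact: c_oppmx.
split.
  move=> A B dA dB; have dAB : \det (A *m B) = 1 by rewrite det_mulmx dA dB mulr1.
  by rewrite !cmod2E // sign_mod2_mul // natr_addb.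
split.
  move=> z; case: (Z2P z) => ->.
    by exists 1; rewrite det1 cmod2E ?det1 // sign_mod2_1.
  exists (shearU 1); rewrite det_shearU cmod2E ?det_shearU //.
  by case: (sign_mod2_shear (or_introl erefl)) => ->.
move=> psi psiM psiN psi_onto A dA.
have psiU : psi (shearU 1) = 1.
  have [B [dB]] := psi_onto 1; rewrite (hom_Z2_generated psiM psiN (generated_SL2 dB)).
  by case: (Z2P (psi (shearU 1))) => ->; rewrite ?mulr0.
by rewrite (hom_Z2_generated psiM psiN (generated_SL2 dA)) psiU mulr1 cmod2E.
Qed.
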